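(* Let $\Sigma$ be a finite connected multigraph (loops allowed) and $\varphi,\vartheta\colon V(\Sigma)\to\mathbb{R}_{\ge0}$ functions such that $\Delta(\varphi)-\Delta(\vartheta)=F-G$, where $F$ and $G$ are effective divisors on $\Sigma$ of degree at most $d$. Suppose there are (not necessarily distinct) vertices $v,w$ with $\varphi(v)=\vartheta(w)=0$. Then \[\max_{u\in V(\Sigma)}|\varphi(u)-\vartheta(u)|\le d\cdot\operatorname{diam}(\Sigma).\]
   Context: A divisor on $\Sigma$ is a formal sum $\sum_v a_v(v)$ with $a_v\in\mathbb{R}$; it is effective if all $a_v\ge0$, and its degree is $\sum_v a_v$. For $\varphi\colon V(\Sigma)\to\mathbb{R}$, the Laplacian is the divisor $\Delta(\varphi)(v)=\sum_{e=vw}(\varphi(v)-\varphi(w))$, the sum over edges $e$ incident to $v$ with other endpoint $w$ (loops contribute $0$). $\operatorname{diam}(\Sigma)$ is the maximum over pairs of vertices of the number of edges in a shortest path joining them. *)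

From HB Require Import structures.
From mathcomp Require Import all_boot all_order all_algebra.
Set Implicit Arguments. Unset Strict Implicit. Unset Printing Implicit Defensive.
Import Order.TTheory GRing.Theory Num.Theory.

(* A finite multigraph (loops and multiple edges allowed): a finite vertex
   type V, a finite edge type E, and each edge e has endpoints src e, tgt e
   (the orientation is auxiliary; all notions below are orientation-free). *)

Section Graph.
Variables (V E : finType) (src tgt : E -> V).

Definition adj : rel V :=
  fun u w => [exists e : E, ((src e == u) && (tgt e == w)) || ((src e == w) && (tgt e == u))].

Definition connectedG : Prop := forall u w : V, connect adj u w.

Definition walkn (n : nat) (u w : V) : bool :=
  [exists p : n.-tuple V, path adj u p && (last u p == w)].

(* graph distance: least number of edges of a walk from u to w
   (equal to #|V| if no such walk of length < #|V| exists, which cannot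
   happen for a connected graph) *)
Definition dist (u w : V) : nat := find (fun n => walkn n u w) (iota 0 #|V|).

Definition diam : nat := \max_(u : V) \max_(w : V) dist u w.

Local Open Scope ring_scope.
Variable R : realFieldType.

(* An edge with src e = v contributes
   phi v - phi (tgt e); an edge with tgt e = v contributes phi v - phi (src e);
   hence a loop contributes 0. *)
Definition laplacian (phi : V -> R) (v : V) : R :=
  \sum_(e : E | src e == v) (phi v - phi (tgt e)) +
  \sum_(e : E | tgt e == v) (phi v - phi (src e)).

Definition effective (D : V -> R) : Prop := forall v, 0 <= D v.
Definition degree (D : V -> R) : R := \sum_(v : V) D v.
End Graph.

(* psi := phi - theta has Laplacian F - G.  For an edge xy with psi x > psi y,
   summing the Laplacian over the superlevel set P = {z | psi x <= psi z}
   gives the net flow of psi out of P: every edge leaving P contributes a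
   nonnegative amount and the edge xy alone contributes psi x - psi y, while
   the sum is at most the mass of F on P, hence at most deg F.  So psi is
   d-Lipschitz along edges, and hence varies by at most d * diam overall; the
   zeros of phi and theta then bound psi from both sides. *)

From HB Require Import structures.
From mathcomp Require Import all_boot all_order all_algebra.
From mathcomp Require Import ring lra.
Set Implicit Arguments. Unset Strict Implicit. Unset Printing Implicit Defensive.
Import Order.TTheory GRing.Theory Num.Theory.
Local Open Scope ring_scope.

Section Laplacian.
Variables (R : realFieldType) (V E : finType).

Lemma sum_incident (s : E -> V) (P : pred V) (g : V -> E -> R) :
  \sum_(z | P z) \sum_(e | s e == z) g z e = \sum_(e | P (s e)) g (s e) e.
Proof.
rewrite (partition_big s P) //; apply: eq_bigr => z Pz.
by apply: eq_big => [e | e /eqP -> //]; case: eqP => [-> |]; rewrite ?Pz ?andbF.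
Qed.

Section Orientation.
Variables (src tgt : E -> V).

Lemma laplacianB (phi theta : V -> R) (v : V) :
  laplacian src tgt (fun z => phi z - theta z) v =
  laplacian src tgt phi v - laplacian src tgt theta v.
Proof.
rewrite /laplacian opprD addrACA -!sumrB.
by congr (_ + _); apply: eq_bigr => e _; ring.
Qed.

Lemma sum_laplacian (psi : V -> R) (P : pred V) :
  \sum_(z | P z) laplacian src tgt psi z =
  \sum_e ((if P (src e) then psi (src e) - psi (tgt e) else 0) +
          (if P (tgt e) then psi (tgt e) - psi (src e) else 0)).
Proof.
by rewrite big_split /= !sum_incident [RHS]big_split /= -!big_mkcond.
Qed.

Lemma laplacian_edge_le (psi F : V -> R) (e0 : E) :
  (forall z, laplacian src tgt psi z <= F z) -> effective F ->
  psi (src e0) - psi (tgt e0) <= degree F.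
Proof.
move=> lapF F_ge0.
have degF_ge0 : 0 <= degree F by apply: sumr_ge0.
have [|tgt_lt] := lerP (psi (src e0) - psi (tgt e0)) 0; first by move/le_trans; apply.
rewrite subr_gt0 in tgt_lt.
pose P := [pred z | psi (src e0) <= psi z].
have outflow_ge0 (e : E) :
  0 <= (if P (src e) then psi (src e) - psi (tgt e) else 0) +
       (if P (tgt e) then psi (tgt e) - psi (src e) else 0).
  rewrite !inE; case: (lerP _ (psi (src e))) => Ps; case: (lerP _ (psi (tgt e))) => Pt;
    rewrite ?addr0 ?add0r //.
  - by rewrite addrC subrKA subrr.
  - by rewrite subr_ge0 ltW // (lt_le_trans Pt).
  - by rewrite subr_ge0 ltW // (lt_le_trans Ps).
have flow_ge : psi (src e0) - psi (tgt e0) <= \sum_(z | P z) laplacian src tgt psi z.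
  have /negbTE tgt_notin : ~~ (psi (src e0) <= psi (tgt e0)) by rewrite -ltNge.
  rewrite sum_laplacian (bigD1 e0) //= lexx tgt_notin addr0 lerDl.
  by apply: sumr_ge0 => e _; apply: outflow_ge0.
apply: le_trans flow_ge _; apply: le_trans (ler_sum _ (fun z _ => lapF z)) _.
by rewrite /degree [X in _ <= X](bigID P) /= lerDl sumr_ge0.
Qed.

End Orientation.

Lemma laplacian_swap (src tgt : E -> V) (psi : V -> R) (v : V) :
  laplacian tgt src psi v = laplacian src tgt psi v.
Proof. by rewrite /laplacian addrC. Qed.

Lemma laplacian_adj_le (src tgt : E -> V) (psi F : V -> R) (x y : V) :
  (forall z, laplacian src tgt psi z <= F z) -> effective F ->
  adj src tgt x y -> `|psi y - psi x| <= degree F.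
Proof.
move=> lapF F_ge0.
have lapF' z : laplacian tgt src psi z <= F z by rewrite laplacian_swap.
have le_st e := laplacian_edge_le e lapF F_ge0.
have le_ts e := laplacian_edge_le e lapF' F_ge0.
rewrite ler_norml lerNl opprB.
by case/existsP=> e /orP [] /andP [/eqP <- /eqP <-]; rewrite ?le_st ?le_ts.
Qed.

End Laplacian.

Section Walks.
Variables (V E : finType) (src tgt : E -> V).

Lemma path_variation_le (R : realFieldType) (psi : V -> R) (d : R) :
  (forall x y, adj src tgt x y -> `|psi y - psi x| <= d) ->
  forall x p, path (adj src tgt) x p -> `|psi (last x p) - psi x| <= d * (size p)%:R.
Proof.
move=> adj_le x p; elim: p x => [|y p IHp] x /=; first by rewrite subrr normr0 mulr0.
case/andP=> xy yp; apply: le_trans (ler_distD (psi y) _ _) _.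
by rewrite -natr1 mulrDr mulr1 lerD ?IHp ?adj_le.
Qed.

Lemma walkn_dist (u w : V) :
  connectedG src tgt -> walkn src tgt (dist src tgt u w) u w.
Proof.
move=> connG.
have has_walk : has (fun n => walkn src tgt n u w) (iota 0 #|V|).
  case/connectP: (connG u w) => p p_path ->.
  case: (shortenP p_path) => q q_path q_uniq _.
  apply/hasP; exists (size q).
    rewrite mem_iota add0n /=.
    by have := max_card (mem (u :: q)); rewrite (card_uniqP q_uniq).
  by apply/existsP; exists (in_tuple q); rewrite q_path eqxx.
have := nth_find 0 has_walk.
by rewrite /dist nth_iota ?add0n //; move: has_walk; rewrite has_find size_iota.
Qed.

Lemma dist_le_diam (u w : V) : (dist src tgt u w <= diam src tgt)%N.
Proof.
exact: leq_trans (@leq_bigmax V (dist src tgt u) w)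
                 (@leq_bigmax V (fun x => \max_y dist src tgt x y) u).
Qed.

Lemma variation_le_diam (R : realFieldType) (psi : V -> R) (d : R) :
  connectedG src tgt -> 0 <= d ->
  (forall x y, adj src tgt x y -> `|psi y - psi x| <= d) ->
  forall u w, `|psi w - psi u| <= d * (diam src tgt)%:R.
Proof.
move=> connG d_ge0 adj_le u w.
have /existsP [p /andP [p_path /eqP p_last]] := walkn_dist u w connG.
have := path_variation_le adj_le p_path; rewrite p_last size_tuple => /le_trans; apply.
by rewrite ler_wpM2l // ler_nat dist_le_diam.
Qed.

End Walks.

Theorem mainTheorem8 (R : realFieldType) (V E : finType) (src tgt : E -> V)
  (phi theta F G : V -> R) (d : R) :
  connectedG src tgt ->
  (forall u, 0 <= phi u) -> (forall u, 0 <= theta u) ->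
  (forall u, laplacian src tgt phi u - laplacian src tgt theta u = F u - G u) ->
  effective F -> effective G ->
  degree F <= d -> degree G <= d ->
  (exists v w : V, phi v = 0 /\ theta w = 0) ->
  forall u : V, `|phi u - theta u| <= d * (diam src tgt)%:R.
Proof.
move=> connG phi_ge0 theta_ge0 lapFG F_ge0 G_ge0 degF _ [v [w [phi_v theta_w]]] u.
pose psi z := phi z - theta z.
have lapF z : laplacian src tgt psi z <= F z.
  by rewrite laplacianB lapFG lerBlDr lerDl G_ge0.
have d_ge0 : 0 <= d by apply: le_trans degF; apply: sumr_ge0.
have adj_le x y : adj src tgt x y -> `|psi y - psi x| <= d.
  by move=> xy; apply: le_trans degF; apply: laplacian_adj_le.
have psi_lip := variation_le_diam connG d_ge0 adj_le.
have := psi_lip u w; have := psi_lip v u; rewrite !ler_norml /psi phi_v theta_w.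
by have := phi_ge0 w; have := theta_ge0 v; lra.
Qed.
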